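(* Let $S_2^*=(-y+x^3-xy^2)\frac{\partial}{\partial x}+(x+x^2y-y^3)\frac{\partial}{\partial y}$ and $H_{2*}(x,y)=\frac{x^2+y^2}{1+2xy}$. For $\epsilon\neq0$ let $\Phi_{2*,\epsilon}(\mathbf{x})=\mathbf{x}+2\epsilon\left(I-\epsilon\,\mathrm{D}S_2^*(\mathbf{x})\right)^{-1}S_2^*(\mathbf{x})$. Let $L_{2*}(x,y)=\left(\frac{x}{\sqrt{1+2xy}},\frac{y}{\sqrt{1+2xy}}\right)$, let $\Phi_{L,\epsilon}(u,v)=\left(\frac{(1-\epsilon^2)u-2\epsilon v}{1+\epsilon^2},\frac{2\epsilon u+(1-\epsilon^2)v}{1+\epsilon^2}\right)$, and let $\widetilde{\Phi}_{2*,\epsilon}=L_{2*}^{-1}\circ\Phi_{L,\epsilon}\circ L_{2*}$, explicitly $$\widetilde{\Phi}_{2*,\epsilon}(x,y)=\left(-\frac{((\epsilon^{2}-1)x+2\epsilon y)\,G}{(\epsilon^{2}+1)\sqrt{2xy+1}},\ \frac{(2\epsilon x+(1-\epsilon^{2})y)\,G}{(\epsilon^{2}+1)\sqrt{2xy+1}}\right),$$ $G=\sqrt{\frac{(2xy+1)(\epsilon^{2}+1)^{2}}{4\epsilon(\epsilon^{2}-1)x^{2}+16\epsilon^{2}xy-4\epsilon(\epsilon^{2}-1)y^{2}+(\epsilon^{2}+1)^{2}}}$. Then: (a) $H_{2*}$ is a first integral of $\Phi_{2*,\epsilon}$, but $S_2^*$ is not a Lie symmetry of $\Phi_{2*,\epsilon}$;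 (b) $H_{2*}$ is a first integral of $\widetilde{\Phi}_{2*,\epsilon}$, and $S_2^*$ is a Lie symmetry of $\widetilde{\Phi}_{2*,\epsilon}$.
   Context: $\mathrm{D}S_2^*$ is the Jacobian matrix of $S_2^*$. $S_2^*$ has an isochronous center at the origin and $L_{2*}$ is a linearization conjugating it near the origin with $-v\frac{\partial}{\partial u}+u\frac{\partial}{\partial v}$; $L_{2*}^{-1}$ is its local inverse. $H$ is a first integral of a map $F$ if $H\circ F=H$; a vector field $X$ is a Lie symmetry of $F$ if $X(F(\mathbf{x}))=DF(\mathbf{x})X(\mathbf{x})$. *)

From Stdlib Require Import Reals.
From Coquelicot Require Import Coquelicot.
Open Scope R_scope.

Definition pt := (R * R)%type.

(* Jacobian matrix DF(p) of F : R^2 -> R^2, stored row-wise: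
   ((dF1/dx, dF1/dy), (dF2/dx, dF2/dy)), via Coquelicot partial derivatives. *)
Definition jac (F : pt -> pt) (p : pt) : (R * R) * (R * R) :=
  let (x, y) := p in
  ((Derive (fun t => fst (F (t, y))) x, Derive (fun t => fst (F (x, t))) y),
   (Derive (fun t => snd (F (t, y))) x, Derive (fun t => snd (F (x, t))) y)).

Definition mat_vec (M : (R * R) * (R * R)) (v : pt) : pt :=
  let '((a, b), (c, d)) := M in let (v1, v2) := v in
  (a * v1 + b * v2, c * v1 + d * v2).

Definition first_integral_on (D : pt -> Prop) (H : pt -> R) (F : pt -> pt) : Prop :=
  forall p, D p -> H (F p) = H p.

Definition lie_symmetry_at (X F : pt -> pt) (p : pt) : Prop :=
  X (F p) = mat_vec (jac F p) (X p).

Definition lie_symmetry_on (D : pt -> Prop) (X F : pt -> pt) : Prop :=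
  forall p, D p -> lie_symmetry_at X F p.

Definition S2 (p : pt) : pt :=
  let (x, y) := p in (- y + x ^ 3 - x * y ^ 2, x + x ^ 2 * y - y ^ 3).

Definition H2 (p : pt) : R :=
  let (x, y) := p in (x ^ 2 + y ^ 2) / (1 + 2 * x * y).

Definition det_Phi2 (eps : R) (p : pt) : R :=
  let '((a, b), (c, d)) := jac S2 p in
  (1 - eps * a) * (1 - eps * d) - (eps * b) * (eps * c).

(* Phi_{2*,eps}(p) = p + 2 eps (I - eps DS_2^*(p))^{-1} S_2^*(p),
   the 2x2 inverse written via the adjugate (meaningful where det_Phi2 <> 0). *)
Definition Phi2 (eps : R) (p : pt) : pt :=
  let '((a, b), (c, d)) := jac S2 p in
  let m11 := 1 - eps * a in let m12 := - (eps * b) in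
  let m21 := - (eps * c) in let m22 := 1 - eps * d in
  let dt := m11 * m22 - m12 * m21 in
  let (s1, s2) := S2 p in
  let (x, y) := p in
  (x + 2 * eps * ((m22 * s1 - m12 * s2) / dt),
   y + 2 * eps * ((- m21 * s1 + m11 * s2) / dt)).

Definition dom_Phi2 (eps : R) (p : pt) : Prop :=
  det_Phi2 eps p <> 0 /\ 1 + 2 * fst p * snd p <> 0 /\
  1 + 2 * fst (Phi2 eps p) * snd (Phi2 eps p) <> 0.

Definition L2 (p : pt) : pt :=
  let (x, y) := p in (x / sqrt (1 + 2 * x * y), y / sqrt (1 + 2 * x * y)).

Definition PhiL (eps : R) (p : pt) : pt :=
  let (u, v) := p in
  (((1 - eps ^ 2) * u - 2 * eps * v) / (1 + eps ^ 2),
   (2 * eps * u + (1 - eps ^ 2) * v) / (1 + eps ^ 2)).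

Definition Dtilde (eps : R) (p : pt) : R :=
  let (x, y) := p in
  4 * eps * (eps ^ 2 - 1) * x ^ 2 + 16 * eps ^ 2 * x * y
  - 4 * eps * (eps ^ 2 - 1) * y ^ 2 + (eps ^ 2 + 1) ^ 2.

Definition Gtilde (eps : R) (p : pt) : R :=
  let (x, y) := p in
  sqrt ((2 * x * y + 1) * (eps ^ 2 + 1) ^ 2 / Dtilde eps p).

(* The explicit map tilde Phi_{2*,eps} = L_{2*}^{-1} o Phi_{L,eps} o L_{2*}. *)
Definition Phi2t (eps : R) (p : pt) : pt :=
  let (x, y) := p in
  (- (((eps ^ 2 - 1) * x + 2 * eps * y) * Gtilde eps p)
     / ((eps ^ 2 + 1) * sqrt (2 * x * y + 1)),
   ((2 * eps * x + (1 - eps ^ 2) * y) * Gtilde eps p)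
     / ((eps ^ 2 + 1) * sqrt (2 * x * y + 1))).

(* Open domain where the explicit formula is defined (and smooth), and
   where H_{2*} o tilde Phi makes sense. *)
Definition dom_Phi2t (eps : R) (p : pt) : Prop :=
  0 < 1 + 2 * fst p * snd p /\ 0 < Dtilde eps p /\
  1 + 2 * fst (Phi2t eps p) * snd (Phi2t eps p) <> 0.

From Stdlib Require Import Reals Lra.
From Coquelicot Require Import Coquelicot.
Open Scope R_scope.

(* (a) Writing the inverse of I - e DS through its adjugate, H o Phi = H becomes a rational
   identity.  At p = (t, 0) the first component of S(Phi p) - DPhi(p) S(p) is
   8 e^3 t^3 A(t) / det^3 for a polynomial A with A(0) = 2 e, so it is nonzero for every
   small t <> 0.
   (b) On its domain tilde Phi = (1 + e^2) PhiL / sqrt D, a scaled rotation divided by the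
   square root of the quadratic polynomial D.  Since S(c p) = c (J p + c^2 C(p)) with J the
   rotation by pi/2 and C homogeneous cubic, only 1 / r and r^2 = D enter for r = sqrt D, and
   both claims reduce to rational identities in x, y, e, r. *)
Set Bullet Behavior "Strict Subproofs".

Lemma jac_ext (F G : pt -> pt) p : (forall q, F q = G q) -> jac F p = jac G p.
Proof.
intros FG; destruct p as [x y]; unfold jac.
now repeat rewrite (Derive_ext _ _ _ (fun t => f_equal _ (FG _))).
Qed.

Lemma Rdiv_eq_of_cross a b c d : b <> 0 -> d <> 0 -> a * d = c * b -> a / b = c / d.
Proof. intros Hb Hd Habcd; field_simplify_eq; trivial; lra. Qed.

Lemma ex_derive_locally_neq0 (f : R -> R) x :
  ex_derive f x -> f x <> 0 -> locally x (fun t => f t <> 0).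
Proof. intros Hf Hx; apply (ex_derive_continuous f x Hf (fun u => u <> 0)), open_neq, Hx. Qed.

Lemma ex_derive_locally_pos (f : R -> R) x :
  ex_derive f x -> 0 < f x -> locally x (fun t => 0 < f t).
Proof. intros Hf Hx; apply (ex_derive_continuous f x Hf (fun u => 0 < u)), open_gt, Hx. Qed.

Lemma jac_S2 x y :
  jac S2 (x, y) = ((3 * x ^ 2 - y ^ 2, -1 - 2 * x * y), (1 + 2 * x * y, x ^ 2 - 3 * y ^ 2)).
Proof.
unfold jac, S2; cbn [fst snd].
repeat f_equal; apply is_derive_unique; auto_derive; trivial; ring.
Qed.

Definition Phi2_det (e x y : R) : R :=
  (1 - e * (3 * x ^ 2 - y ^ 2)) * (1 - e * (x ^ 2 - 3 * y ^ 2)) + (e * (1 + 2 * x * y)) ^ 2.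

Definition Phi2_x (e x y : R) : R :=
  x + 2 * e * (((1 - e * (x ^ 2 - 3 * y ^ 2)) * (- y + x ^ 3 - x * y ^ 2)
                - e * (1 + 2 * x * y) * (x + x ^ 2 * y - y ^ 3)) / Phi2_det e x y).

Definition Phi2_y (e x y : R) : R :=
  y + 2 * e * ((e * (1 + 2 * x * y) * (- y + x ^ 3 - x * y ^ 2)
                + (1 - e * (3 * x ^ 2 - y ^ 2)) * (x + x ^ 2 * y - y ^ 3)) / Phi2_det e x y).

Lemma det_Phi2_eq e x y : det_Phi2 e (x, y) = Phi2_det e x y.
Proof. unfold det_Phi2, Phi2_det; rewrite jac_S2; ring. Qed.

Lemma Phi2_eq e x y : Phi2 e (x, y) = (Phi2_x e x y, Phi2_y e x y).
Proof.
unfold Phi2, Phi2_x, Phi2_y, Phi2_det; rewrite jac_S2; cbv beta iota zeta delta [S2].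
f_equal; apply (f_equal2 Rplus), (f_equal2 Rmult), (f_equal2 Rdiv); trivial; ring.
Qed.

Lemma Phi2_H2_cross e x y : Phi2_det e x y <> 0 ->
  (Phi2_x e x y ^ 2 + Phi2_y e x y ^ 2) * (1 + 2 * x * y)
  = (x ^ 2 + y ^ 2) * (1 + 2 * Phi2_x e x y * Phi2_y e x y).
Proof. intros Hd; unfold Phi2_x, Phi2_y; unfold Phi2_det in *; field; exact Hd. Qed.

Lemma H2_first_integral_Phi2 e : first_integral_on (dom_Phi2 e) H2 (Phi2 e).
Proof.
intros [x y] [Hd [Hxy Hdeg]]; cbn [fst snd] in Hxy.
rewrite det_Phi2_eq in Hd; rewrite Phi2_eq in *; cbn [fst snd] in Hdeg.
apply Rdiv_eq_of_cross; trivial.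
apply Phi2_H2_cross, Hd.
Qed.

Definition axis_factor (e t : R) : R :=
  (1 - e * t ^ 2) * (1 - t ^ 2)
  * (2 * e + t ^ 2 * ((2 * e - 1 - 3 * e ^ 2) * (1 + t ^ 2) + (2 * e - e ^ 2) * t ^ 4 - e ^ 2 * t ^ 6)).

Lemma Phi2_lie_defect_axis e t : Phi2_det e t 0 <> 0 ->
  fst (S2 (Phi2 e (t, 0))) - fst (mat_vec (jac (Phi2 e) (t, 0)) (S2 (t, 0)))
  = 8 * e ^ 3 * t ^ 3 * axis_factor e t / Phi2_det e t 0 ^ 3.
Proof.
intros Hd.
rewrite (jac_ext _ (fun p => (Phi2_x e (fst p) (snd p), Phi2_y e (fst p) (snd p))))
  by (intros [x y]; apply Phi2_eq).
unfold jac; cbv beta iota delta [fst snd].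
eassert (Dx : is_derive (fun s => Phi2_x e s 0) t _).
{ unfold Phi2_x, Phi2_det in *; auto_derive; [repeat split; auto | reflexivity]. }
eassert (Dy : is_derive (fun s => Phi2_x e t s) 0 _).
{ unfold Phi2_x, Phi2_det in *; auto_derive; [repeat split; auto | reflexivity]. }
rewrite (is_derive_unique (fun s : R => Phi2_x e s 0) t _ Dx),
  (is_derive_unique (fun s : R => Phi2_x e t s) 0 _ Dy), Phi2_eq.
unfold S2, mat_vec, axis_factor, Phi2_x, Phi2_y; unfold Phi2_det in *; cbn [fst snd].
field; contradict Hd; lra.
Qed.

Lemma not_lie_symmetry_axis e t : e <> 0 -> t <> 0 ->
  Phi2_det e t 0 <> 0 -> axis_factor e t <> 0 -> ~ lie_symmetry_at S2 (Phi2 e) (t, 0).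
Proof.
intros He Ht Hd Ha Hlie.
assert (Hdefect := Phi2_lie_defect_axis e t Hd).
rewrite Hlie, Rminus_diag in Hdefect.
revert Hdefect; apply not_eq_sym; unfold Rdiv.
apply Rmult_integral_contrapositive_currified; [| now apply Rinv_neq_0_compat, pow_nonzero].
apply Rmult_integral_contrapositive_currified; [| exact Ha].
apply Rmult_integral_contrapositive_currified; [| now apply pow_nonzero].
apply Rmult_integral_contrapositive_currified; [lra | now apply pow_nonzero].
Qed.

Lemma dom_Phi2_axis e t : Phi2_det e t 0 <> 0 -> dom_Phi2 e (t, 0).
Proof.
intros Hd; unfold dom_Phi2; rewrite det_Phi2_eq, Phi2_eq; cbn [fst snd].
split; [exact Hd | split; [lra | intros Hdeg]].
assert (Hcross := Phi2_H2_cross e t 0 Hd); rewrite Hdeg in Hcross.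
assert (Phi2_x e t 0 = 0 /\ Phi2_y e t 0 = 0) as [Zx Zy] by (split; nra).
rewrite Zx, Zy in Hdeg; lra.
Qed.

Lemma not_lie_symmetry_near_origin e : e <> 0 -> forall delta, 0 < delta ->
  exists p : pt, Rabs (fst p) < delta /\ Rabs (snd p) < delta /\
    dom_Phi2 e p /\ ~ lie_symmetry_at S2 (Phi2 e) p.
Proof.
intros He delta Hdelta.
assert (Hnear : locally 0 (fun t => Phi2_det e t 0 <> 0 /\ axis_factor e t <> 0)).
{ apply filter_and; apply ex_derive_locally_neq0.
  - unfold Phi2_det; auto_derive; trivial.
  - replace (Phi2_det e 0 0) with (1 + e ^ 2) by (unfold Phi2_det; ring); nra.
  - unfold axis_factor; auto_derive; trivial.
  - replace (axis_factor e 0) with (2 * e) by (unfold axis_factor; ring); lra. }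
destruct Hnear as [r Hr].
assert (Hm : 0 < Rmin r delta) by (apply Rmin_glb_lt; [apply cond_pos | exact Hdelta]).
assert (Hmr := Rmin_l r delta); assert (Hmd := Rmin_r r delta).
set (t := Rmin r delta / 2).
assert (Ht : 0 < t < r /\ t < delta) by (unfold t; lra).
destruct (Hr t) as [Hd Ha].
{ change (Rabs (t + - 0) < r); rewrite Rabs_pos_eq; lra. }
exists (t, 0); cbn [fst snd].
rewrite Rabs_R0, Rabs_pos_eq by lra.
split; [lra | split; [lra | split]].
- apply dom_Phi2_axis, Hd.
- apply not_lie_symmetry_axis; trivial; lra.
Qed.

(* [(Phi2t_num1, Phi2t_num2) e x y = (1 + e^2) * PhiL e (x, y)] *)
Definition Phi2t_num1 (e x y : R) : R := (1 - e ^ 2) * x - 2 * e * y.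
Definition Phi2t_num2 (e x y : R) : R := 2 * e * x + (1 - e ^ 2) * y.

Lemma Phi2t_eq e x y : 0 < 1 + 2 * x * y -> 0 < Dtilde e (x, y) ->
  Phi2t e (x, y) = (Phi2t_num1 e x y / sqrt (Dtilde e (x, y)),
                    Phi2t_num2 e x y / sqrt (Dtilde e (x, y))).
Proof.
intros Hxy HD; cbv beta iota delta [Phi2t Gtilde].
rewrite sqrt_div_alt, sqrt_mult, sqrt_pow2 by nra.
assert (0 < sqrt (2 * x * y + 1)) by (apply sqrt_lt_R0; lra).
assert (0 < sqrt (Dtilde e (x, y))) by (apply sqrt_lt_R0; lra).
unfold Phi2t_num1, Phi2t_num2; f_equal; field; nra.
Qed.

Lemma is_derive_loc_div_sqrt (f N D : R -> R) x n d :
  locally x (fun t => f t = N t / sqrt (D t)) ->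
  is_derive N x n -> is_derive D x d -> 0 < D x ->
  is_derive f x (n / sqrt (D x) - N x * d / (2 * sqrt (D x) * D x)).
Proof.
intros Hf HN HD Hpos.
apply (is_derive_ext_loc (fun t => N t / sqrt (D t)));
  [exact (filter_imp _ _ (fun t Ht => eq_sym Ht) Hf) |].
assert (Hr : 0 < sqrt (D x)) by (apply sqrt_lt_R0, Hpos).
assert (Hrr := sqrt_sqrt (D x) (Rlt_le _ _ Hpos)).
evar (l : R); replace (_ - _) with l; unfold l.
- auto_derive; [repeat split; solve [eexists; eassumption | lra] | reflexivity].
- rewrite (is_derive_unique (fun t : R => N t) x n HN),
    (is_derive_unique (fun t : R => D t) x d HD), Hrr.
  field; lra.
Qed.

Lemma Phi2t_H2_cross e x y :
  (Phi2t_num1 e x y ^ 2 + Phi2t_num2 e x y ^ 2) * (1 + 2 * x * y)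
  = (x ^ 2 + y ^ 2) * (Dtilde e (x, y) + 2 * Phi2t_num1 e x y * Phi2t_num2 e x y).
Proof. unfold Phi2t_num1, Phi2t_num2, Dtilde; ring. Qed.

Lemma H2_first_integral_Phi2t e : first_integral_on (dom_Phi2t e) H2 (Phi2t e).
Proof.
intros [x y] [Hxy [HD Hdeg]]; cbn [fst snd] in Hxy.
rewrite Phi2t_eq in * by assumption; cbn [fst snd] in Hdeg; unfold H2.
assert (Hr : 0 < sqrt (Dtilde e (x, y))) by (apply sqrt_lt_R0, HD).
assert (Hrr := sqrt_sqrt _ (Rlt_le _ _ HD)).
set (r := sqrt (Dtilde e (x, y))) in *.
set (a := Phi2t_num1 e x y); set (b := Phi2t_num2 e x y).
apply Rdiv_eq_of_cross; trivial; [lra |].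
replace (((a / r) ^ 2 + (b / r) ^ 2) * (1 + 2 * x * y))
  with ((a ^ 2 + b ^ 2) * (1 + 2 * x * y) / (r * r)) by (field; lra).
replace ((x ^ 2 + y ^ 2) * (1 + 2 * (a / r) * (b / r)))
  with ((x ^ 2 + y ^ 2) * (r * r + 2 * a * b) / (r * r)) by (field; lra).
rewrite Hrr; unfold a, b; rewrite Phi2t_H2_cross; reflexivity.
Qed.

Definition Dtilde_dx (e x y : R) : R := 8 * e * (e ^ 2 - 1) * x + 16 * e ^ 2 * y.
Definition Dtilde_dy (e x y : R) : R := 16 * e ^ 2 * x - 8 * e * (e ^ 2 - 1) * y.

Lemma jac_Phi2t e x y D r :
  0 < 1 + 2 * x * y -> D = Dtilde e (x, y) -> 0 < D -> r = sqrt D ->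
  jac (Phi2t e) (x, y) =
  (((1 - e ^ 2) / r - Phi2t_num1 e x y * Dtilde_dx e x y / (2 * r * D),
    - (2 * e) / r - Phi2t_num1 e x y * Dtilde_dy e x y / (2 * r * D)),
   (2 * e / r - Phi2t_num2 e x y * Dtilde_dx e x y / (2 * r * D),
    (1 - e ^ 2) / r - Phi2t_num2 e x y * Dtilde_dy e x y / (2 * r * D))).
Proof.
intros Hxy -> HD ->.
assert (Hx : locally x (fun t => 0 < 1 + 2 * t * y /\ 0 < Dtilde e (t, y))).
{ apply filter_and; apply ex_derive_locally_pos; trivial;
    cbv beta iota delta [Dtilde]; auto_derive; trivial. }
assert (Hy : locally y (fun t => 0 < 1 + 2 * x * t /\ 0 < Dtilde e (x, t))).
{ apply filter_and; apply ex_derive_locally_pos; trivial;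
    cbv beta iota delta [Dtilde]; auto_derive; trivial. }
cbv beta iota delta [jac]; f_equal; f_equal; apply is_derive_unique;
  [ apply (is_derive_loc_div_sqrt _ (fun t => Phi2t_num1 e t y) (fun t => Dtilde e (t, y)))
  | apply (is_derive_loc_div_sqrt _ (fun t => Phi2t_num1 e x t) (fun t => Dtilde e (x, t)))
  | apply (is_derive_loc_div_sqrt _ (fun t => Phi2t_num2 e t y) (fun t => Dtilde e (t, y)))
  | apply (is_derive_loc_div_sqrt _ (fun t => Phi2t_num2 e x t) (fun t => Dtilde e (x, t))) ].
all: try solve [refine (filter_imp _ _ _ Hx) || refine (filter_imp _ _ _ Hy);
  intros t [Ht1 Ht2]; rewrite Phi2t_eq by assumption; reflexivity].
all: try solve [unfold Phi2t_num1, Phi2t_num2, Dtilde_dx, Dtilde_dy;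
  cbv beta iota delta [Dtilde]; auto_derive; [trivial | ring]].
all: exact HD.
Qed.

Lemma S2_scale x y c :
  S2 (x * c, y * c)
  = ((- y + (x ^ 3 - x * y ^ 2) * c ^ 2) * c, (x + (x ^ 2 * y - y ^ 3) * c ^ 2) * c).
Proof. unfold S2; f_equal; ring. Qed.

Lemma lie_symmetry_Phi2t e : lie_symmetry_on (dom_Phi2t e) S2 (Phi2t e).
Proof.
intros [x y] [Hxy [HD _]]; cbn [fst snd] in Hxy.
unfold lie_symmetry_at.
rewrite (jac_Phi2t e x y _ _ Hxy eq_refl HD eq_refl), (Phi2t_eq e x y Hxy HD).
assert (Hr : 0 < sqrt (Dtilde e (x, y))) by (apply sqrt_lt_R0, HD).
assert (Hr2 : (/ sqrt (Dtilde e (x, y))) ^ 2 = / Dtilde e (x, y)).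
{ rewrite <- (sqrt_sqrt _ (Rlt_le _ _ HD)) at 2; field; lra. }
unfold Rdiv at 1 2; rewrite S2_scale, Hr2.
set (r := sqrt (Dtilde e (x, y))) in *.
cbv beta iota delta [S2 mat_vec Dtilde] in *;
  unfold Phi2t_num1, Phi2t_num2, Dtilde_dx, Dtilde_dy.
f_equal; field; lra.
Qed.

Theorem proposition17 :
  forall eps : R, eps <> 0 ->
  (* (a) *)
  (first_integral_on (dom_Phi2 eps) H2 (Phi2 eps) /\
   (* S_2^* is not a Lie symmetry of Phi_{2*,eps}, not even on any
      neighbourhood of the origin *)
   (forall delta : R, 0 < delta ->
      exists p : pt, Rabs (fst p) < delta /\ Rabs (snd p) < delta /\
        dom_Phi2 eps p /\ ~ lie_symmetry_at S2 (Phi2 eps) p)) /\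
  (* (b) *)
  (first_integral_on (dom_Phi2t eps) H2 (Phi2t eps) /\
   lie_symmetry_on (dom_Phi2t eps) S2 (Phi2t eps)).
Proof.
intros eps Heps; split; split.
- apply H2_first_integral_Phi2.
- apply not_lie_symmetry_near_origin, Heps.
- apply H2_first_integral_Phi2t.
- apply lie_symmetry_Phi2t.
Qed.
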